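(* Let $M$ be a duplicial module in a pre-additive category $\mathcal A$. Then for every $n\ge0$, $$\pi_n=p_n\circ T_n=T_n\circ p_n .$$ In particular, if $M$ is cyclic ($T_n=1$ for all $n$), then $\pi_n=p_n$.
   Context: Let $\mathcal A$ be a pre-additive category. Let $\Lambda_\infty$ be the category with objects $[n]$, $n\ge0$, where $\Lambda_\infty([m],[n])$ is the set of weakly monotone maps $f:\mathbb Z\to\mathbb Z$ with $f(j+m+1)=f(j)+n+1$ for all $j$ (determined by values on $\{0,\dots,m\}$). Let $\Lambda_+\subset\Lambda_\infty$ be the subcategory of those $f$ with $f(0)\ge0$, and $\Delta\subset\Lambda_+$ those with also $f(m)\le n$. Define $\varepsilon^n_i:[n-1]\to[n]$ ($n\ge1$, $0\le i\le n$) by $\varepsilon^n_i(j)=j$ for $0\le j<i$, $j+1$ for $i\le j\le n-1$; $\eta^n_i:[n+1]\to[n]$ ($0\le i\le n+1$) by $\eta^n_i(j)=j$ for $0\le j\le i$, $j-1$ for $i<j\le n+1$; $\tau_n:[n]\to[n]$, $\tau_n(j)=j+1$ ($=\eta^n_{n+1}\varepsilon^{n+1}_0$). A duplicial module is a functor $M:\Lambda_+^{op}\to\mathcal A$. Write $M_n=M([n])$, $\partial_{n,i}=M(\varepsilon^n_i):M_n\to M_{n-1}$, $s_{n,i}=M(\eta^n_i):M_n\to M_{n+1}$, $t_n=M(\tau_n)=\partial_{n+1,0}s_{n,n+1}$, $T_n=t_n^{n+1}$; $M$ is cyclic if $T_n=1$ for all $n$. Convention: $M_{-1}=0$, maps to/from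 it are $0$. Define $p_n=(1-s_{n-1,0}\partial_{n,1})(1-s_{n-1,1}\partial_{n,2})\cdots(1-s_{n-1,n-1}\partial_{n,n})$ ($p_0=1$), the Karoubi operator $\kappa_n=(-1)^n(\partial_{n+1,0}s_{n,n+1}-s_{n-1,n}\partial_{n,0})$ and the Dwyer–Kan operator $\pi_n=(-1)^n\partial_{n+1,0}\kappa_{n+1}^n s_{n,n+1}$. *)

From HB Require Import structures.
From mathcomp Require Import all_boot all_order all_algebra.
Set Implicit Arguments. Unset Strict Implicit. Unset Printing Implicit Defensive.
Import Order.TTheory GRing.Theory Num.Theory.
Local Open Scope ring_scope.

Record PreAdd := {
  Obj : Type;
  Hom : Obj -> Obj -> zmodType;
  idm : forall a, Hom a a;
  hcomp : forall a b c, Hom b c -> Hom a b -> Hom a c;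
  hcompA : forall a b c d (h : Hom c d) (g : Hom b c) (f : Hom a b),
      hcomp h (hcomp g f) = hcomp (hcomp h g) f;
  comp1m : forall a b (f : Hom a b), hcomp (idm b) f = f;
  compm1 : forall a b (f : Hom a b), hcomp f (idm a) = f;
  compDl : forall a b c (g1 g2 : Hom b c) (f : Hom a b),
      hcomp (g1 + g2) f = hcomp g1 f + hcomp g2 f;
  compDr : forall a b c (g : Hom b c) (f1 f2 : Hom a b),
      hcomp g (f1 + f2) = hcomp g f1 + hcomp g f2 }.

Arguments idm {C} a : rename.
Arguments hcomp {C a b c} : rename.

(* Morphisms [m] -> [n] of Lambda_+ : weakly monotone f : Z -> Z with
   f (j + m + 1) = f j + n + 1 and f 0 >= 0. *)
Definition LamPlus (m n : nat) (f : int -> int) : Prop :=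
  (forall x y : int, x <= y -> f x <= f y) /\
  (forall j : int, f (j + (m.+1)%:Z) = f j + (n.+1)%:Z) /\
  0 <= f 0.

(* The morphism part is
   given on all functions Z -> Z, but only constrained on morphisms of
   Lambda_+ (values elsewhere are irrelevant). *)
Record Duplicial (C : PreAdd) := {
  Mobj : nat -> Obj C;
  Mmor : forall m n : nat, (int -> int) -> Hom (Mobj n) (Mobj m);
  Mmor_id : forall m, Mmor m m id = idm (Mobj m);
  Mmor_comp : forall (m n k : nat) (f g : int -> int),
      LamPlus m n f -> LamPlus n k g ->
      Mmor m k (g \o f) = hcomp (Mmor m n f) (Mmor n k g) }.

(* extension of g : {0..m} -> Z to the quasi-periodic map [m] -> [n] *)
Definition qext (m n : nat) (g : int -> int) (j : int) : int :=
  g (j %% (m.+1)%:Z)%Z + (j %/ (m.+1)%:Z)%Z * (n.+1)%:Z.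

Definition eps (k i : nat) : int -> int :=
  qext k k.+1 (fun j => if j < i%:Z then j else j + 1).

Definition etaL (n i : nat) : int -> int :=
  qext n.+1 n (fun j => if j <= i%:Z then j else j - 1).

Section Ops.
Variables (C : PreAdd) (M : Duplicial C).

Local Notation M_ n := (Mobj M n).

Definition face (k i : nat) : Hom (M_ k.+1) (M_ k) := Mmor M k k.+1 (eps k i).
Definition dgn (n i : nat) : Hom (M_ n) (M_ n.+1) := Mmor M n.+1 n (etaL n i).

Definition tn (n : nat) : Hom (M_ n) (M_ n) := hcomp (face n 0) (dgn n n.+1).

Definition hpow (a : Obj C) (f : Hom a a) (k : nat) : Hom a a :=
  iter k (hcomp f) (idm a).

Definition TT (n : nat) : Hom (M_ n) (M_ n) := hpow (tn n) n.+1.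

Definition sgn (a b : Obj C) (n : nat) (x : Hom a b) : Hom a b :=
  if odd n then - x else x.

Definition pp (n : nat) : Hom (M_ n) (M_ n) :=
  match n with
  | 0 => idm (M_ 0)
  | k.+1 => foldr (fun i acc => hcomp (idm (M_ k.+1) - hcomp (dgn k i) (face k i.+1)) acc)
                  (idm (M_ k.+1)) (iota 0 k.+1)
  end.

Definition kappaS (n : nat) : Hom (M_ n.+1) (M_ n.+1) :=
  sgn n.+1 (hcomp (face n.+1 0) (dgn n.+1 n.+2) - hcomp (dgn n n.+1) (face n 0)).

Definition piDK (n : nat) : Hom (M_ n) (M_ n) :=
  sgn n (hcomp (face n 0) (hcomp (hpow (kappaS n) n) (dgn n n.+1))).

End Ops.

(* The faces d_i with 1 <= i <= n annihilate pi_n: the relation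
   d_i kappa = - kappa d_{i+1} moves the face index up until it reaches the
   last face, which annihilates kappa.  Every factor of p_n has the form
   1 - s_{i-1} d_i, so p_n fixes every map annihilated by these faces and
   pi_n = p_n pi_n.  On the other hand, pushing s_{n,n+1} through kappa^n gives
   pi_n = T_n + (a sum of maps s_{n-1,j} Z_j), and p_n annihilates every
   degeneracy s_{n-1,j}; hence pi_n = p_n T_n.  Finally T_n is M applied to the
   translation by n + 1, which commutes with every morphism of Lambda_+, so
   T_n commutes with p_n. *)

From Pilot Require Import Defs.
From mathcomp Require Import all_boot all_order all_algebra.
From mathcomp Require Import zify.
From Stdlib Require Import FunctionalExtensionality.
Set Implicit Arguments. Unset Strict Implicit. Unset Printing Implicit Defensive.
Import Order.TTheory GRing.Theory Num.Theory.
Local Open Scope ring_scope.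

Definition qperiodic (m : nat) (c : int) (f : int -> int) :=
  forall j, f (j + (m.+1)%:Z) = f j + c.

Section QuasiPeriodic.
Variables (m : nat) (c : int) (f : int -> int).
Hypothesis f_qp : qperiodic m c f.

Lemma qperiodic_addMn x (q : nat) : f (x + q%:Z * (m.+1)%:Z) = f x + q%:Z * c.
Proof.
elim: q => [|q IHq]; first by rewrite !mul0r !addr0.
have -> : x + (q.+1)%:Z * (m.+1)%:Z = x + q%:Z * (m.+1)%:Z + (m.+1)%:Z by lia.
by rewrite f_qp IHq; lia.
Qed.

Lemma qperiodic_addMz x (q : int) : f (x + q * (m.+1)%:Z) = f x + q * c.
Proof.
case: q => [q|q]; first exact: qperiodic_addMn.
have := qperiodic_addMn (x + Negz q * (m.+1)%:Z) q.+1.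
have -> : x + Negz q * (m.+1)%:Z + (q.+1)%:Z * (m.+1)%:Z = x by rewrite NegzE; lia.
by move=> ->; rewrite NegzE; lia.
Qed.

End QuasiPeriodic.

Lemma eq_qperiodic m c f g : qperiodic m c f -> qperiodic m c g ->
  (forall r : int, 0 <= r -> r <= m%:Z -> f r = g r) -> f = g.
Proof.
move=> f_qp g_qp eq_fg; apply: functional_extensionality => j.
rewrite (divz_eq j (m.+1)%:Z) addrC (qperiodic_addMz f_qp) (qperiodic_addMz g_qp).
have := @ltz_pmod j (m.+1)%:Z isT; have := @modz_ge0 j (m.+1)%:Z isT.
by move=> ? ?; rewrite eq_fg //; lia.
Qed.

Lemma qperiodic_comp m n k f g : qperiodic m (n.+1)%:Z f -> qperiodic n (k.+1)%:Z g ->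
  qperiodic m (k.+1)%:Z (g \o f).
Proof. by move=> f_qp g_qp j /=; rewrite f_qp g_qp. Qed.

Lemma LamPlus_qperiodic m n f : LamPlus m n f -> qperiodic m (n.+1)%:Z f.
Proof. by case=> _ []. Qed.

Lemma qext_qperiodic m n g : qperiodic m (n.+1)%:Z (qext m n g).
Proof.
move=> j; rewrite /qext modzDr divzDr ?dvdzz // divzz /=.
by rewrite mulrDl mul1r addrA.
Qed.

Lemma qextE m n g r : 0 <= r -> r <= m%:Z -> qext m n g r = g r.
Proof.
move=> r_ge0 r_le; have r_small : (0 <= r < (m.+1)%:Z) by apply/andP; split=> //; lia.
by rewrite /qext modz_small // divz_small // mul0r addr0.
Qed.

Lemma homo_int_succ (f : int -> int) :
  (forall j, f j <= f (j + 1)) -> {homo f : x y / x <= y}.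
Proof.
move=> f_succ x y le_xy.
have -> : y = x + (`|y - x|%N)%:Z by lia.
have homo_f : {homo (fun k : nat => f (x + k%:Z)) : i j / (i <= j)%N >-> i <= j}.
  apply: homo_leq => [//|a b c|k]; first exact: le_trans.
  by rewrite intS addrCA addrC; apply: f_succ.
by have := homo_f 0%N `|y - x|%N isT; rewrite addr0.
Qed.

Lemma LamPlus_qext m n g :
  (forall r : int, 0 <= r -> r < m%:Z -> g r <= g (r + 1)) ->
  g m%:Z <= g 0 + (n.+1)%:Z -> 0 <= g 0 -> LamPlus m n (qext m n g).
Proof.
move=> g_succ g_last g0_ge0; have g_qp := qext_qperiodic m n g.
split; last by split; [exact: g_qp | rewrite qextE].
apply: homo_int_succ => j; rewrite (divz_eq j (m.+1)%:Z) addrC.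
have := @ltz_pmod j (m.+1)%:Z isT; have := @modz_ge0 j (m.+1)%:Z isT.
move: (j %% _)%Z (j %/ _)%Z => r q r_ge0 r_lt.
rewrite -addrA [q * _ + 1]addrC addrA !(qperiodic_addMz g_qp) lerD2r.
have [r_ltm|r_gem] := ltP r m%:Z.
  by rewrite !qextE //; try lia; exact: g_succ.
have -> : r = m%:Z by lia.
have -> : m%:Z + 1 = 0 + (m.+1)%:Z by lia.
by rewrite g_qp !qextE //; lia.
Qed.

Lemma LamPlus_eps k i : LamPlus k k.+1 (eps k i).
Proof. by apply: LamPlus_qext => [r *||] /=; do ?[case: ifP => ?]; lia. Qed.

Lemma LamPlus_etaL n i : LamPlus n.+1 n (etaL n i).
Proof. by apply: LamPlus_qext => [r *||] /=; do ?[case: ifP => ?]; lia. Qed.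

Lemma LamPlus_shift m (k : nat) : LamPlus m m (fun j => j + k%:Z).
Proof. by split; last split; move=> *; lia. Qed.

Lemma eps_cases k i (r : int) :
  r < 0 \/ (k.+1)%:Z < r \/
  (0 <= r /\ r < i%:Z /\ r <= k%:Z /\ eps k i r = r) \/
  (0 <= r /\ i%:Z <= r /\ r <= k%:Z /\ eps k i r = r + 1) \/
  (r = (k.+1)%:Z /\ i = 0%N /\ eps k i r = (k.+3)%:Z) \/
  (r = (k.+1)%:Z /\ (0 < i)%N /\ eps k i r = (k.+2)%:Z).
Proof.
have [|r_ge0] := ltP r 0; first by left.
have [|r_le] := ltP (k.+1)%:Z r; first by right; left.
have [r_lt|r_ge] := ltP r (k.+1)%:Z.
  have r_le_k : r <= k%:Z by lia.
  by rewrite /eps qextE //; case: ifP => ?; lia.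
have -> : r = 0 + (k.+1)%:Z by lia.
by rewrite (LamPlus_qperiodic (LamPlus_eps k i)) /eps qextE //=; case: ifP => ?; lia.
Qed.

Lemma etaL_cases n i (r : int) :
  r < 0 \/ (n.+2)%:Z < r \/
  (0 <= r /\ r <= i%:Z /\ r <= (n.+1)%:Z /\ etaL n i r = r) \/
  (i%:Z < r /\ r <= (n.+1)%:Z /\ etaL n i r = r - 1) \/
  (r = (n.+2)%:Z /\ etaL n i r = (n.+1)%:Z).
Proof.
have [|r_ge0] := ltP r 0; first by left.
have [|r_le] := ltP (n.+2)%:Z r; first by right; left.
have [r_lt|r_ge] := ltP r (n.+2)%:Z.
  have r_le_n : r <= (n.+1)%:Z by lia.
  by rewrite /etaL qextE //; case: ifP => ?; lia.
have -> : r = 0 + (n.+2)%:Z by lia.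
by rewrite (LamPlus_qperiodic (LamPlus_etaL n i)) /etaL qextE //=; do ?[case: ifP => ?]; lia.
Qed.

(* An identity between composites of [eps], [etaL] and translations is checked
   on one period only (by [eq_qperiodic]); there each map is given by the case
   analyses above, after which the identity is linear arithmetic. *)
Ltac no_eps_etaL x :=
  lazymatch x with
  | context [eps _ _ _] => fail
  | context [etaL _ _ _] => fail
  | _ => idtac
  end.

Ltac case_eps_etaL :=
  repeat match goal with
  | |- context [eps ?k ?i ?x] => no_eps_etaL x;
      let e := fresh "e" in have := eps_cases k i x; generalize (eps k i x) => e
  | |- context [etaL ?k ?i ?x] => no_eps_etaL x;
      let e := fresh "e" in have := etaL_cases k i x; generalize (etaL k i x) => e
  end.

Ltac solve_LamPlus :=
  solve [apply: LamPlus_eps | apply: LamPlus_etaL | apply: LamPlus_shift].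

Ltac solve_qperiodic :=
  repeat first [apply: qperiodic_comp | apply: LamPlus_qperiodic; solve_LamPlus].

Ltac eq_LamPlus :=
  apply: eq_qperiodic; [solve_qperiodic | solve_qperiodic
                       | move=> r ? ? /=; case_eps_etaL; move=> *; lia].

Section PreAdditive.
Variable C : PreAdd.
Local Notation Hom := (@Defs.Hom C).
Implicit Types a b c : Obj C.

Lemma hcomp0l a b c (f : Hom a b) : hcomp (0 : Hom b c) f = 0.
Proof. by apply: (addrI (hcomp (0 : Hom b c) f)); rewrite -compDl !addr0. Qed.

Lemma hcomp0r a b c (g : Hom b c) : hcomp g (0 : Hom a b) = 0.
Proof. by apply: (addrI (hcomp g (0 : Hom a b))); rewrite -compDr !addr0. Qed.

Lemma hcompNl a b c (g : Hom b c) (f : Hom a b) : hcomp (- g) f = - hcomp g f.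
Proof. by apply: (addrI (hcomp g f)); rewrite -compDl !subrr hcomp0l. Qed.

Lemma hcompNr a b c (g : Hom b c) (f : Hom a b) : hcomp g (- f) = - hcomp g f.
Proof. by apply: (addrI (hcomp g f)); rewrite -compDr !subrr hcomp0r. Qed.

Lemma hcompBl a b c (g1 g2 : Hom b c) (f : Hom a b) :
  hcomp (g1 - g2) f = hcomp g1 f - hcomp g2 f.
Proof. by rewrite compDl hcompNl. Qed.

Lemma hcompBr a b c (g : Hom b c) (f1 f2 : Hom a b) :
  hcomp g (f1 - f2) = hcomp g f1 - hcomp g f2.
Proof. by rewrite compDr hcompNr. Qed.

Lemma sgnS a b n (x : Hom a b) : sgn n.+1 x = - sgn n x.
Proof. by rewrite /sgn /=; case: (odd n); rewrite ?opprK. Qed.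

Lemma sgnK a b n (x : Hom a b) : sgn n (sgn n x) = x.
Proof. by rewrite /sgn; case: (odd n); rewrite ?opprK. Qed.

Lemma sgnD a b n (x y : Hom a b) : sgn n (x + y) = sgn n x + sgn n y.
Proof. by rewrite /sgn; case: (odd n); rewrite ?opprD. Qed.

Lemma sgnB a b n (x y : Hom a b) : sgn n (x - y) = sgn n x - sgn n y.
Proof. by rewrite /sgn; case: (odd n); rewrite ?opprB ?opprK 1?addrC. Qed.

Lemma sgn0 a b n : sgn n (0 : Hom a b) = 0.
Proof. by rewrite /sgn; case: (odd n); rewrite ?oppr0. Qed.

Lemma hcomp_sgnl a b c n (g : Hom b c) (f : Hom a b) :
  hcomp (sgn n g) f = sgn n (hcomp g f).
Proof. by rewrite /sgn; case: (odd n); rewrite ?hcompNl. Qed.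

Lemma hcomp_sgnr a b c n (g : Hom b c) (f : Hom a b) :
  hcomp g (sgn n f) = sgn n (hcomp g f).
Proof. by rewrite /sgn; case: (odd n); rewrite ?hcompNr. Qed.

Lemma hpowS a (f : Hom a a) k : hpow f k.+1 = hcomp f (hpow f k).
Proof. by []. Qed.

Lemma hpowN a (f : Hom a a) k : hpow (- f) k = sgn k (hpow f k).
Proof. by elim: k => [//|k IHk]; rewrite !hpowS IHk hcompNl hcomp_sgnr sgnS. Qed.

Lemma hpow_sgn a (f : Hom a a) n : hpow (sgn n f) n = sgn n (hpow f n).
Proof. by rewrite /sgn; case: ifP => odd_n; rewrite ?hpowN /sgn ?odd_n. Qed.

End PreAdditive.

Section Duplicial.
Variables (C : PreAdd) (M : Duplicial C).
Local Notation Hom := (@Defs.Hom C).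
Local Notation M_ := (Mobj M).
Local Notation d := (face M).
Local Notation s := (dgn M).

Lemma Mmor_comp_eq m n n' k f g f' g' :
  LamPlus m n f -> LamPlus n k g -> LamPlus m n' f' -> LamPlus n' k g' ->
  g \o f = g' \o f' ->
  hcomp (Mmor M m n f) (Mmor M n k g) = hcomp (Mmor M m n' f') (Mmor M n' k g').
Proof. by move=> f_LP g_LP f'_LP g'_LP gfE; rewrite -!Mmor_comp // gfE. Qed.

Lemma Mmor_comp_id m n f g : LamPlus m n f -> LamPlus n m g -> g \o f = id ->
  hcomp (Mmor M m n f) (Mmor M n m g) = idm (M_ m).
Proof. by move=> f_LP g_LP gfE; rewrite -Mmor_comp // gfE Mmor_id. Qed.

Lemma face_dgn k i : hcomp (d k i) (s k i) = idm (M_ k).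
Proof. by apply: Mmor_comp_id; try solve_LamPlus; eq_LamPlus. Qed.

Lemma faceS_dgn k i : hcomp (d k i.+1) (s k i) = idm (M_ k).
Proof. by apply: Mmor_comp_id; try solve_LamPlus; eq_LamPlus. Qed.

Lemma face_dgn_le k i j : (i <= j <= k.+1)%N -> ((0 < i) || (j <= k))%N ->
  hcomp (d k.+1 i) (s k.+1 j.+1) = hcomp (s k j) (d k i).
Proof. by move=> *; apply: Mmor_comp_eq; try solve_LamPlus; eq_LamPlus. Qed.

Lemma face_dgn_gt k i j : (j < i <= k.+1)%N ->
  hcomp (d k.+1 i.+1) (s k.+1 j) = hcomp (s k j) (d k i).
Proof. by move=> *; apply: Mmor_comp_eq; try solve_LamPlus; eq_LamPlus. Qed.

Lemma dgn_dgn k i j : (i <= j <= k.+1)%N ->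
  hcomp (s k.+1 j.+1) (s k i) = hcomp (s k.+1 i) (s k j).
Proof. by move=> *; apply: Mmor_comp_eq; try solve_LamPlus; eq_LamPlus. Qed.

Lemma face_face k i j : (i <= j)%N ->
  hcomp (d k i) (d k.+1 j.+1) = hcomp (d k j) (d k.+1 i).
Proof. by move=> *; apply: Mmor_comp_eq; try solve_LamPlus; eq_LamPlus. Qed.

Lemma tnE k : tn M k = Mmor M k k (fun j => j + 1%N%:Z).
Proof.
by rewrite /tn /face /dgn -Mmor_comp; try solve_LamPlus; congr Mmor; eq_LamPlus.
Qed.

Lemma hpow_tn k p : hpow (tn M k) p = Mmor M k k (fun j => j + p%:Z).
Proof.
elim: p => [|p IHp].
  by rewrite /= -(Mmor_id M k); congr Mmor; apply: functional_extensionality => j /=; lia.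
rewrite hpowS IHp tnE -Mmor_comp; try solve_LamPlus.
by congr Mmor; apply: functional_extensionality => j /=; lia.
Qed.

Lemma face_tn k i : (i <= k)%N -> hcomp (d k i) (tn M k.+1) = hcomp (tn M k) (d k i.+1).
Proof. by move=> *; rewrite !tnE; apply: Mmor_comp_eq; try solve_LamPlus; eq_LamPlus. Qed.

Lemma face_last_tn k : hcomp (d k k.+1) (tn M k.+1) = d k 0.
Proof.
by rewrite tnE /face -Mmor_comp; try solve_LamPlus; congr Mmor; eq_LamPlus.
Qed.

Lemma tn_dgnS k j : (j <= k)%N -> hcomp (tn M k.+1) (s k j.+1) = hcomp (s k j) (tn M k).
Proof. by move=> *; rewrite !tnE; apply: Mmor_comp_eq; try solve_LamPlus; eq_LamPlus. Qed.

Lemma TT_natural p q f : LamPlus p q f ->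
  hcomp (TT M p) (Mmor M p q f) = hcomp (Mmor M p q f) (TT M q).
Proof.
move=> f_LP; rewrite /TT !hpow_tn; apply: Mmor_comp_eq => //; try exact: LamPlus_shift.
by apply: functional_extensionality => j /=; apply: LamPlus_qperiodic.
Qed.

Lemma TT_dgn m j : hcomp (TT M m.+1) (s m j) = hcomp (s m j) (TT M m).
Proof. exact/TT_natural/LamPlus_etaL. Qed.

Lemma TT_face m j : hcomp (TT M m) (d m j) = hcomp (d m j) (TT M m.+1).
Proof. exact/TT_natural/LamPlus_eps. Qed.

Lemma kappaSE n : kappaS M n = sgn n.+1 (tn M n.+1 - hcomp (s n n.+1) (d n 0)).
Proof. by []. Qed.

Lemma face_kappa m i : (0 < i <= m.+1)%N ->
  hcomp (d m.+1 i) (kappaS M m.+1) = - hcomp (kappaS M m) (d m.+1 i.+1).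
Proof.
case/andP=> i_gt0 i_le; rewrite !kappaSE hcomp_sgnr hcomp_sgnl sgnS hcompBr hcompBl.
rewrite face_tn // hcompA face_dgn_le ?i_gt0 ?i_le ?ltnSn //.
by rewrite -hcompA -face_face // -hcompA.
Qed.

Lemma face_last_kappa n : hcomp (d n n.+1) (kappaS M n) = 0.
Proof.
by rewrite kappaSE hcomp_sgnr hcompBr face_last_tn hcompA face_dgn comp1m subrr sgn0.
Qed.

Lemma face_hpow_kappa m i k : (0 < i <= m.+2)%N -> (m.+2 < i + k)%N ->
  hcomp (d m.+1 i) (hpow (kappaS M m.+1) k) = 0.
Proof.
elim: k i => [|k IHk] i /andP[i_gt0 i_le] ik_gt; first by rewrite addn0 ltnNge i_le in ik_gt.
rewrite hpowS hcompA; have [->|i_neq] := eqVneq i m.+2.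
  by rewrite face_last_kappa hcomp0l.
have i_le' : (i <= m.+1)%N by rewrite -ltnS ltn_neqAle i_neq.
by rewrite face_kappa ?i_gt0 // hcompNl -hcompA IHk ?hcomp0r ?oppr0 // addSnnS.
Qed.

Lemma face_piDK m i : (0 < i <= m.+1)%N -> hcomp (d m i) (piDK M m.+1) = 0.
Proof.
case: i => [//|i] /andP[_ i_le]; rewrite /piDK hcomp_sgnr hcompA -face_face //.
by rewrite -hcompA (hcompA (d m.+1 i.+2)) face_hpow_kappa ?hcomp0l ?hcomp0r ?sgn0 //; lia.
Qed.

Definition pfold m (l : seq nat) : Hom (M_ m.+1) (M_ m.+1) :=
  foldr (fun i acc => hcomp (idm _ - hcomp (s m i) (d m i.+1)) acc) (idm _) l.

Lemma ppE m : pp M m.+1 = pfold m (iota 0 m.+1).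
Proof. by []. Qed.

Lemma pfold_cat m l1 l2 : pfold m (l1 ++ l2) = hcomp (pfold m l1) (pfold m l2).
Proof. by elim: l1 => [|i l1 IHl] /=; rewrite ?comp1m // IHl hcompA. Qed.

Lemma pfold_id a m l (X : Hom a (M_ m.+1)) :
  (forall i, i \in l -> hcomp (d m i.+1) X = 0) -> hcomp (pfold m l) X = X.
Proof.
elim: l => [|i l IHl] faceX /=; first by rewrite comp1m.
rewrite -hcompA IHl => [|j l_j]; last by apply: faceX; rewrite inE l_j orbT.
by rewrite hcompBl comp1m -hcompA faceX ?mem_head // hcomp0r subr0.
Qed.

Lemma pp_id a m (X : Hom a (M_ m.+1)) :
  (forall i, (0 < i <= m.+1)%N -> hcomp (d m i) X = 0) -> hcomp (pp M m.+1) X = X.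
Proof. by move=> faceX; rewrite ppE pfold_id // => i; rewrite mem_iota => ?; apply: faceX. Qed.

Lemma pfold_dgn m i l : (forall j, j \in l -> i < j <= m)%N ->
  exists G, hcomp (pfold m l) (s m i) = hcomp (s m i) G.
Proof.
elim: l => [|j l IHl] l_gt /=; first by exists (idm _); rewrite comp1m compm1.
have [G GE] := IHl (fun j' l_j' => l_gt j' (mem_behead (s := j :: l) l_j')).
have /andP[ij jm] := l_gt j (mem_head j l).
case: m i l j l_gt IHl G GE ij jm => [|m] i l [|j] //= l_gt IHl G GE ij jm.
exists (hcomp (idm _ - hcomp (s m j) (d m j.+1)) G).
rewrite -hcompA GE hcompA hcompBl comp1m -hcompA face_dgn_gt ?ij //.
rewrite hcompA dgn_dgn; last by lia.
by rewrite -hcompA -{1}(compm1 (s m.+1 i)) -hcompBr hcompA.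
Qed.

Lemma pp_dgn m i : (i <= m)%N -> hcomp (pp M m.+1) (s m i) = 0.
Proof.
move=> le_im; rewrite ppE; have -> : iota 0 m.+1 = iota 0 i ++ i :: iota i.+1 (m - i).
  by rewrite -[in LHS](subnKC le_im) -addnS iotaD.
rewrite -cat1s !pfold_cat -!hcompA.
have [G GE] : exists G, hcomp (pfold m (iota i.+1 (m - i))) (s m i) = hcomp (s m i) G.
  by apply: pfold_dgn => j; rewrite mem_iota => /andP[? ?]; apply/andP; split; lia.
have dgn_killed : hcomp (idm _ - hcomp (s m i) (d m i.+1)) (s m i) = 0.
  by rewrite hcompBl comp1m -hcompA faceS_dgn compm1 subrr.
by rewrite comp1m GE (hcompA _ (s m i)) dgn_killed hcomp0l hcomp0r.
Qed.

Lemma TT_pfold m l : hcomp (TT M m.+1) (pfold m l) = hcomp (pfold m l) (TT M m.+1).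
Proof.
elim: l => [|j l IHl] /=; first by rewrite comp1m compm1.
rewrite -/(pfold m l) hcompA hcompBr compm1 hcompA TT_dgn -hcompA TT_face hcompA.
by rewrite -{1}(comp1m (TT M m.+1)) -hcompBl -hcompA IHl hcompA.
Qed.

Lemma TT_pp n : hcomp (TT M n) (pp M n) = hcomp (pp M n) (TT M n).
Proof. by case: n => [|m]; rewrite ?ppE ?TT_pfold //= comp1m compm1. Qed.

Inductive dgn_span a k (lo hi : nat) : Hom a (M_ k.+1) -> Prop :=
| dgn_span0 : dgn_span lo hi 0
| dgn_spanD x y : dgn_span lo hi x -> dgn_span lo hi y -> dgn_span lo hi (x + y)
| dgn_span_dgn j (Z : Hom a (M_ k)) :
    (lo <= j <= hi)%N -> dgn_span lo hi (hcomp (s k j) Z).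

Lemma dgn_span_sgn a k lo hi n (x : Hom a (M_ k.+1)) :
  dgn_span lo hi x -> dgn_span lo hi (sgn n x).
Proof.
rewrite /sgn; case: (odd n) => //; elim=> [|y z _ IHy _ IHz|j Z lohi_j].
- by rewrite oppr0; apply: dgn_span0.
- by rewrite opprD; apply: dgn_spanD.
- by rewrite -hcompNr; apply: dgn_span_dgn.
Qed.

Lemma dgn_span_comp a k k' lo hi lo' hi' (f : Hom (M_ k.+1) (M_ k'.+1)) :
  (forall j, (lo <= j <= hi)%N -> exists j' (W : Hom (M_ k) (M_ k')),
      (lo' <= j' <= hi')%N /\ hcomp f (s k j) = hcomp (s k' j') W) ->
  forall x : Hom a (M_ k.+1), dgn_span lo hi x -> dgn_span lo' hi' (hcomp f x).
Proof.
move=> f_dgn x; elim=> [|y z _ IHy _ IHz|j Z /f_dgn[j' [W [lohi_j' fE]]]].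
- by rewrite hcomp0r; apply: dgn_span0.
- by rewrite compDr; apply: dgn_spanD.
- by rewrite hcompA fE -hcompA; apply: dgn_span_dgn.
Qed.

Lemma pp_dgn_span a m (Y : Hom a (M_ m.+1)) : dgn_span 0 m Y -> hcomp (pp M m.+1) Y = 0.
Proof.
elim=> [|y z _ IHy _ IHz|j Z /andP[_ le_jm]]; first exact: hcomp0r.
  by rewrite compDr IHy IHz addr0.
by rewrite hcompA pp_dgn // hcomp0l.
Qed.

Lemma face0_dgn_span a m (Y : Hom a (M_ m.+2)) :
  dgn_span 1 m.+1 Y -> dgn_span 0 m (hcomp (d m.+1 0) Y).
Proof.
apply: dgn_span_comp => -[//|j] /andP[_ le_jm]; exists j, (d m 0).
by rewrite face_dgn_le //= ltnW.
Qed.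

Lemma kappa_dgnS m j : (j <= m)%N ->
  hcomp (kappaS M m.+1) (s m.+1 j.+1) = - hcomp (s m.+1 j) (kappaS M m).
Proof.
move=> le_jm; rewrite !kappaSE hcomp_sgnl hcomp_sgnr sgnS hcompBl hcompBr.
rewrite tn_dgnS 1?ltnW // -hcompA face_dgn_le /= ?(leq_trans le_jm) //.
by rewrite hcompA dgn_dgn ?leqnn ?andbT 1?ltnW // -hcompA.
Qed.

Lemma kappa_dgn_last n : hcomp (kappaS M n) (s n n.+1) =
  hcomp (s n n.+1) (sgn n (tn M n)) + hcomp (s n n) (sgn n.+1 (tn M n)).
Proof.
rewrite kappaSE hcomp_sgnl hcompBl tn_dgnS // -hcompA -/(tn M n).
by rewrite sgnB !hcomp_sgnr !sgnS opprK addrC.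
Qed.

(* Pushing s_{m+1,m+2} through kappa^k: each kappa either turns the last
   degeneracy into s_{m+1,m+1}, or lowers the index of a degeneracy by one. *)
Lemma hpow_kappa_dgn_last m k : (k <= m.+1)%N -> exists2 Y,
  dgn_span (m.+2 - k) m.+1 Y &
  hcomp (hpow (kappaS M m.+1) k) (s m.+1 m.+2) =
  hcomp (s m.+1 m.+2) (hpow (sgn m.+1 (tn M m.+1)) k) + Y.
Proof.
elim: k => [|k IHk] le_km.
  by exists 0; [apply: dgn_span0 | rewrite /= comp1m compm1 addr0].
have [Y spanY YE] := IHk (ltnW le_km).
exists (hcomp (s m.+1 m.+1) (hcomp (sgn m.+2 (tn M m.+1)) (hpow (sgn m.+1 (tn M m.+1)) k))
        + hcomp (kappaS M m.+1) Y).
  apply: dgn_spanD; first by apply: dgn_span_dgn; apply/andP; split; lia.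
  apply: dgn_span_comp spanY => -[|j] /andP[lo_j le_j]; first by lia.
  exists j, (- kappaS M m); split; first by apply/andP; split; lia.
  by rewrite kappa_dgnS ?hcompNr //; lia.
by rewrite hpowS -hcompA YE compDr hcompA kappa_dgn_last compDl -!hcompA addrA.
Qed.

Lemma piDK_TT_dgn_span m : exists2 Z, dgn_span 0 m Z & piDK M m.+1 = TT M m.+1 + Z.
Proof.
have [Y spanY YE] := @hpow_kappa_dgn_last m m.+1 (leqnn _).
rewrite subSnn in spanY.
exists (sgn m.+1 (hcomp (d m.+1 0) Y)); first exact/dgn_span_sgn/face0_dgn_span.
by rewrite /piDK YE compDr hcompA -/(tn M m.+1) sgnD hpow_sgn hcomp_sgnr sgnK.
Qed.

Lemma piDK_ppTT n : piDK M n = hcomp (pp M n) (TT M n).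
Proof.
case: n => [|m]; first by rewrite /piDK /TT /sgn /= !comp1m !compm1.
have [Z spanZ piE] := piDK_TT_dgn_span m.
rewrite -[LHS]pp_id; last by move=> i; apply: face_piDK.
by rewrite {1}piE compDr (pp_dgn_span spanZ) addr0.
Qed.

End Duplicial.

Theorem mainTheorem2 (C : PreAdd) (M : Duplicial C) :
  (forall n : nat, piDK M n = hcomp (pp M n) (TT M n) /\
                   piDK M n = hcomp (TT M n) (pp M n)) /\
  ((forall n : nat, TT M n = idm (Mobj M n)) ->
   forall n : nat, piDK M n = pp M n).
Proof.
split=> [n|TT1 n]; first by rewrite TT_pp -piDK_ppTT.
by rewrite piDK_ppTT TT1 compm1.
Qed.
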